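(* Let $\Re$ be a finite commutative Frobenius ring which is the Chinese product of finite commutative local Frobenius rings $R_1,\dots,R_s$, i.e. $\Re\cong R_1\times\cdots\times R_s$ via the Chinese Remainder Theorem isomorphism $\Phi$. Let $\{C,D\}$ be a pair of linear codes of length $n$ over $\Re$ with $C=\texttt{CRT}(C_1,\dots,C_s)$ and $D=\texttt{CRT}(D_1,\dots,D_s)$, where $C_i,D_i$ are linear codes of length $n$ over $R_i$. If for each $1\le i\le s$ the pair $\{C_i,D_i\}$ is an $\ell$-DLIP of codes over $R_i$, then $\{C,D\}$ is an $\ell$-DLIP of codes over $\Re$.
   Context: A linear code of length $n$ over a finite commutative ring is a submodule of the $n$-fold free module. Let $R_j$ have residue field $\mathbb{F}_{q_j}$, and let $\Phi=(\Phi_1,\dots,\Phi_s):\Re\to R_1\times\cdots\times R_s$ be the ring isomorphism given by the Chinese Remainder Theorem, extended coordinatewise to $\Re^n\to R_1^n\times\cdots\times R_s^n$. For linear codes $C_j\subseteq R_j^n$, $\texttt{CRT}(C_1,\dots,C_s):=\Phi^{-1}(C_1\times\cdots\times C_s)$. For a linear code $C_j$ over the local ring $R_j$, $\dim(C_j):=\log_{q_j}|C_j|$; for a linear code $C$ over $\Re$, setting $Q=\prod_{j=1}^s q_j$, $\dim(C):=\log_Q|C|$ (equivalently $\sum_j \frac{\ln q_j}{\ln Q}\dim(\Phi_j(C))$). For a nonnegative integer $\ell$, a pair $\{C,D\}$ of linear codes of length $n$ is an $\ell$-dimension linear intersection pair ($\ell$-DLIP) if $\dim(C\cap D)=\ell$.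 *)

From HB Require Import structures.
From Stdlib Require Import Reals.
From mathcomp Require Import all_boot all_order all_algebra.
Set Implicit Arguments. Unset Strict Implicit. Unset Printing Implicit Defensive.
Import GRing.Theory.
Local Open Scope ring_scope.

Definition is_ideal (R : finComNzRingType) (I : {set R}) : bool :=
  [&& 0 \in I, [forall x in I, forall y in I, x + y \in I],
      [forall x in I, - x \in I] & [forall r : R, forall x in I, r * x \in I]].

Definition is_maximal_ideal (R : finComNzRingType) (M : {set R}) : bool :=
  [&& is_ideal M, M != [set: R] &
      [forall J : {set R}, (is_ideal J && (M \subset J)) ==> ((J == M) || (J == [set: R]))]].

Definition is_minimal_ideal (R : finComNzRingType) (I : {set R}) : bool :=
  [&& is_ideal I, I != [set 0] &
      [forall J : {set R}, (is_ideal J && (J \subset I)) ==> ((J == [set 0]) || (J == I))]].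

Definition is_local (R : finComNzRingType) : Prop :=
  exists M : {set R}, is_maximal_ideal M /\
    forall M' : {set R}, is_maximal_ideal M' -> M' = M.

(* a finite commutative local ring is Frobenius iff it has a unique minimal ideal *)
Definition is_local_frobenius (R : finComNzRingType) : Prop :=
  is_local R /\
  exists I : {set R}, is_minimal_ideal I /\
    forall I' : {set R}, is_minimal_ideal I' -> I' = I.

Definition max_ideal (R : finComNzRingType) : {set R} :=
  odflt set0 [pick M : {set R} | is_maximal_ideal M].

(* q = |R / m|, the cardinality of the residue field F_q *)
Definition residue_card (R : finComNzRingType) : nat :=
  divn #|[set: R]| #|max_ideal R|.

Definition is_linear_code (R : finComNzRingType) (n : nat) (C : {set 'rV[R]_n}) : Prop :=
  0 \in C /\ (forall x y, x \in C -> y \in C -> x + y \in C) /\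
  (forall (r : R) x, x \in C -> r *: x \in C).

Definition dim_local (R : finComNzRingType) (n : nat) (C : {set 'rV[R]_n}) : Rdefinitions.R :=
  Rdiv (ln (INR #|C|)) (ln (INR (residue_card R))).

Definition dim_crt (s : nat) (R : 'I_s -> finComNzRingType)
  (Re : finComNzRingType) (n : nat) (C : {set 'rV[Re]_n}) : Rdefinitions.R :=
  Rdiv (ln (INR #|C|)) (ln (INR (\prod_(j < s) residue_card (R j))%N)).

Definition CRT (s : nat) (R : 'I_s -> finComNzRingType) (Re : finComNzRingType)
  (Phi : forall j, {rmorphism Re -> R j}) (n : nat)
  (Cs : forall j, {set 'rV[R j]_n}) : {set 'rV[Re]_n} :=
  [set c : 'rV[Re]_n | [forall j, map_mx (Phi j) c \in Cs j]].

(* Phi = (Phi_1,...,Phi_s) is a ring isomorphism Re -> R_1 x ... x R_s *)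
Definition is_crt_iso (s : nat) (R : 'I_s -> finComNzRingType) (Re : finComNzRingType)
  (Phi : forall j, {rmorphism Re -> R j}) : Prop :=
  (forall x y : Re, (forall j, Phi j x = Phi j y) -> x = y) /\
  (forall f : forall j, R j, exists x : Re, forall j, Phi j x = f j).

(* Linear codes are nonempty, and the CRT bijection Re^n ~ R_1^n x ... x R_s^n
   identifies CRT(C_j) :&: CRT(D_j) with the product of the C_j :&: D_j, so
   ln |C :&: D| = sum_j ln |C_j :&: D_j| = l * sum_j ln q_j = l * ln Q.
   Dividing by ln Q > 0 (each q_j >= 2, and s > 0 since Re is nontrivial)
   gives dim (C :&: D) = l. *)

From Stdlib Require Import Reals Lra.
From mathcomp Require Import all_boot all_order all_algebra.
Set Implicit Arguments. Unset Strict Implicit. Unset Printing Implicit Defensive.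
Import GRing.Theory.

Lemma card_proper_subgroup_double (V : finZmodType) (I : {set V}) (a : V) :
  {in I &, forall x y, (x - y)%R \in I} -> a \notin I -> (#|I|.*2 <= #|V|)%N.
Proof.
move=> subI aNI; pose aI := [set (a + x)%R | x in I].
have card_aI : #|aI| = #|I| by apply/card_imset/addrI.
have disj : I :&: aI = set0.
  apply/setP=> y; rewrite !inE; apply/andP=> -[yI /imsetP[x xI yE]].
  by move: (subI y x yI xI); rewrite yE addrK (negbTE aNI).
rewrite -addnn -{2}card_aI -cardsUI disj cards0 addn0 -cardsT.
exact: subset_leq_card (subsetT _).
Qed.

Lemma max_ideal_maximal (R : finComNzRingType) :
  is_local R -> is_maximal_ideal (max_ideal R).
Proof.
case=> M [maxM _]; rewrite /max_ideal.
by case: pickP => [//|/(_ M)]; rewrite maxM.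
Qed.

Lemma residue_card_ge2 (R : finComNzRingType) : is_local R -> (2 <= residue_card R)%N.
Proof.
move=> /max_ideal_maximal /and3P[/and4P[M0 /forallP MD /forallP MN _] MT _].
set M := max_ideal R in M0 MD MN MT *.
have /subsetPn[a _ aNM] : ~~ ([set: R] \subset M) by rewrite subTset.
have subM : {in M &, forall x y, (x - y)%R \in M}.
  move=> x y xM yM; have /implyP/(_ xM)/forallP/(_ (- y)%R)/implyP := MD x.
  by apply; apply: (implyP (MN y)).
have M_gt0 : (0 < #|M|)%N by apply/card_gt0P; exists 0%R.
by rewrite /residue_card leq_divRL // mul2n cardsT (card_proper_subgroup_double subM aNM).
Qed.

Lemma prodn_gt1 (I : finType) (i0 : I) (F : I -> nat) :
  (forall i, 1 < F i)%N -> (1 < \prod_i F i)%N.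
Proof.
move=> F_gt1; rewrite (bigD1 i0) //=; apply: leq_trans (F_gt1 i0) _.
by rewrite leq_pmulr // prodn_gt0 // => i; apply: ltnW.
Qed.

Lemma linear_code0 (R : finComNzRingType) (n : nat) (C : {set 'rV[R]_n}) :
  is_linear_code C -> 0%R \in C.
Proof. by case. Qed.

Lemma in_CRT (s : nat) (R : 'I_s -> finComNzRingType) (Re : finComNzRingType)
    (Phi : forall j, {rmorphism Re -> R j}) (n : nat) (S : forall j, {set 'rV[R j]_n})
    (c : 'rV[Re]_n) :
  (c \in CRT Phi S) = [forall j, map_mx (Phi j) c \in S j].
Proof. by rewrite inE. Qed.

Lemma CRT_setI (s : nat) (R : 'I_s -> finComNzRingType) (Re : finComNzRingType)
    (Phi : forall j, {rmorphism Re -> R j}) (n : nat) (Cs Ds : forall j, {set 'rV[R j]_n}) :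
  CRT Phi Cs :&: CRT Phi Ds = CRT Phi (fun j => Cs j :&: Ds j).
Proof.
apply/setP=> c; rewrite inE !in_CRT.
apply/andP/forallP=> [[/forallP cC /forallP cD] j | cCD]; first by rewrite inE cC cD.
by split; apply/forallP=> j; have /setIP[] := cCD j.
Qed.

Section ChineseProduct.

Variables (s : nat) (R : 'I_s -> finComNzRingType) (Re : finComNzRingType).
Variable Phi : forall j, {rmorphism Re -> R j}.
Hypothesis crt : is_crt_iso Phi.
Variable n : nat.

Lemma crt_index_gt0 : (0 < s)%N.
Proof.
case: crt; case: (posnP s) => // s0 inj _.
have : (0 : Re)%R = 1%R by apply: inj => j; have := ltn_ord j; rewrite {2}s0.
by move/eqP; rewrite eq_sym oner_eq0.
Qed.

Lemma map_mx_crt_inj (c d : 'rV[Re]_n) :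
  (forall j, map_mx (Phi j) c = map_mx (Phi j) d) -> c = d.
Proof.
move=> cd; apply/matrixP=> i k; apply: crt.1 => j.
by have /matrixP/(_ i k) := cd j; rewrite !mxE.
Qed.

Lemma map_mx_crt_surj (g : forall j, 'rV[R j]_n) :
  exists c : 'rV[Re]_n, forall j, map_mx (Phi j) c = g j.
Proof.
have /fin_all_exists[f fE] : forall ik : 'I_1 * 'I_n, exists x : Re,
    forall j, Phi j x = g j ik.1 ik.2.
  by move=> ik; apply: crt.2.
by exists (\matrix_(i, k) f (i, k))%R => j; apply/matrixP=> i k; rewrite !mxE fE.
Qed.

Lemma card_CRT (S : forall j, {set 'rV[R j]_n}) :
  #|CRT Phi S| = (\prod_(j < s) #|S j|)%N.
Proof.
pose F (c : 'rV[Re]_n) : {dffun forall j, 'rV[R j]_n} := [ffun j => map_mx (Phi j) c].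
have F_inj : injective F.
  by move=> c d /ffunP cd; apply: map_mx_crt_inj => j; have := cd j; rewrite !ffunE.
rewrite -(card_imset _ F_inj).
pose Fam : simpl_pred {dffun forall j, 'rV[R j]_n} := family (fun j => mem (S j)).
have -> : F @: CRT Phi S = [set g in Fam].
  apply/setP=> g; rewrite inE; apply/imsetP/familyP => [[c] | Sg].
    by rewrite in_CRT => /forallP Sc -> j; rewrite ffunE; apply: Sc.
  have [c cE] := map_mx_crt_surj g.
  exists c; last by apply/ffunP=> j; rewrite ffunE cE.
  by rewrite in_CRT; apply/forallP=> j; rewrite cE; apply: Sg.
by rewrite cardsE /Fam card_family foldrE big_map big_enum.
Qed.

End ChineseProduct.

Section Logarithms.

Local Open Scope R_scope.

Lemma ln_INR_gt0 (m : nat) : (1 < m)%N -> 0 < ln (INR m).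
Proof. by move=> m_gt1; rewrite -ln_1; apply: ln_increasing; [lra | apply/lt_1_INR/ltP]. Qed.

Lemma ln_INR_muln (m k : nat) : (0 < m)%N -> (0 < k)%N ->
  ln (INR (m * k)) = ln (INR m) + ln (INR k).
Proof.
move=> /ltP m_gt0 /ltP k_gt0; rewrite -[(m * k)%N]/(Nat.mul m k) mult_INR.
by rewrite ln_mult //; apply: lt_0_INR.
Qed.

Lemma ln_prod_proportional (I : Type) (r : seq I) (a q : I -> nat) (x : R) :
  (forall j, 0 < a j)%N -> (forall j, 0 < q j)%N ->
  (forall j, ln (INR (a j)) = x * ln (INR (q j))) ->
  ln (INR (\prod_(j <- r) a j)) = x * ln (INR (\prod_(j <- r) q j)).
Proof.
move=> a_gt0 q_gt0 aq; elim: r => [|j r IHr]; first by rewrite !big_nil ln_1; lra.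
rewrite !big_cons !ln_INR_muln ?prodn_gt0 // IHr aq; lra.
Qed.

Lemma Rdiv_eq_l (a b x : R) : 0 < b -> a / b = x <-> a = x * b.
Proof. by move=> b_gt0; split=> [<- | ->]; field; lra. Qed.

End Logarithms.

Theorem proposition3p2 (s : nat) (R : 'I_s -> finComNzRingType)
  (Re : finComNzRingType) (Phi : forall j, {rmorphism Re -> R j})
  (n l : nat) (Cs Ds : forall j, {set 'rV[R j]_n}) :
  is_crt_iso Phi ->
  (forall j, is_local_frobenius (R j)) ->
  (forall j, is_linear_code (Cs j)) ->
  (forall j, is_linear_code (Ds j)) ->
  (forall j, dim_local (Cs j :&: Ds j) = INR l) ->
  dim_crt R (CRT Phi Cs :&: CRT Phi Ds) = INR l.
Proof.
move=> crt frob codeC codeD dimCD.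
have q_ge2 j : (2 <= residue_card (R j))%N by apply/residue_card_ge2/(frob j).1.
have CD_gt0 j : (0 < #|Cs j :&: Ds j|)%N.
  by apply/card_gt0P; exists 0%R; rewrite inE !linear_code0.
have lnCD j : ln (INR #|Cs j :&: Ds j|) = Rmult (INR l) (ln (INR (residue_card (R j)))).
  by apply/(Rdiv_eq_l _ _ (ln_INR_gt0 (q_ge2 j))); apply: dimCD.
have Q_gt1 := prodn_gt1 (Ordinal (crt_index_gt0 crt)) q_ge2.
rewrite /dim_crt CRT_setI card_CRT //; apply/(Rdiv_eq_l _ _ (ln_INR_gt0 Q_gt1)).
by apply: ln_prod_proportional => // j; apply: ltnW.
Qed.
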